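(* Let $r\geq 3$ and let $D$ be an $m$-colored semicomplete $r$-partite digraph such that every directed $4$-cycle $\overrightarrow{C}_4$ contained in $D$ (as a subdigraph) is at most $2$-colored. Let $x,y$ be distinct vertices of $D$. If there exists a directed path from $x$ to $y$ using exactly $3$ colors and there is no directed path from $y$ to $x$ using at most $3$ colors, then $d(x,y)\leq 2$.
   Context: A semicomplete $r$-partite digraph ($r\ge 2$) is a digraph whose vertex set is partitioned into $r$ nonempty independent sets (partite sets) such that for any two vertices $u,v$ in different partite sets at least one of the arcs $(u,v)$, $(v,u)$ is present (both may be present); there are no arcs inside a partite set. An $m$-colored digraph is a digraph whose arcs are each assigned one of $m$ colors. A directed path (no repeated vertices) is $j$-colored if its arcs use exactly $j$ distinct colors; it uses at most $k$ colors if it is $j$-colored for some $1\le j\le k$. A subdigraph is at most $k$-colored if its arcs use at most $k$ colors. $\overrightarrow{C}_n$ is the directed cycle of length $n$. $d(x,y)$ denotes the minimum number of arcs of a directed path from $x$ to $y$. *)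

From mathcomp Require Import all_boot.
Set Implicit Arguments. Unset Strict Implicit. Unset Printing Implicit Defensive.

(* An m-coloring assigns to each ordered pair a color; only the values on
   arcs are relevant, and they are required to lie in 'I_m-range (< m). *)

Definition semicomplete_multipartite (T : finType) (r : nat)
  (part : T -> 'I_r) (arc : rel T) : Prop :=
  (forall i : 'I_r, exists v : T, part v = i) /\
  (forall u v : T, part u = part v -> ~~ arc u v) /\
  (forall u v : T, part u <> part v -> arc u v || arc v u).

Definition m_coloring (T : finType) (arc : rel T) (m : nat)
  (color : T -> T -> nat) : Prop :=
  forall u v : T, arc u v -> color u v < m.

Definition walk_colors (T : finType) (color : T -> T -> nat) (x : T) (s : seq T)
  : seq nat :=
  pairmap color x s.

Definition num_colors (T : finType) (color : T -> T -> nat) (x : T) (s : seq T)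
  : nat :=
  size (undup (walk_colors color x s)).

Definition dpath (T : finType) (arc : rel T) (x y : T) (s : seq T) : bool :=
  [&& path arc x s, uniq (x :: s) & last x s == y].

Definition C4_at_most_2_colored (T : finType) (arc : rel T)
  (color : T -> T -> nat) : Prop :=
  forall a b c d : T, uniq [:: a; b; c; d] ->
    arc a b -> arc b c -> arc c d -> arc d a ->
    size (undup [:: color a b; color b c; color c d; color d a]) <= 2.

From mathcomp Require Import all_boot.
Set Implicit Arguments. Unset Strict Implicit.

(* Assume d(x,y) >= 3, i.e. there is neither an arc x->y nor a
   path x->z->y, while no path from y to x uses at most 3 colors.  Every
   path from y to x with at most 3 arcs uses at most 3 colors, so there are
   no such short back paths.  Hence x and y lie in the same partite set, and
   every vertex v of another partite set is either a common out-neighbour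
   (x->v, y->v) or a common in-neighbour (v->x, v->y) of x and y.
   We call a vertex "trapped" if it is a common out-neighbour, or a vertex
   of the partite set of x other than y entered by an arc from a common
   out-neighbour.  Being trapped is preserved along arcs: leaving a common
   out-neighbour a towards a common in-neighbour w gives a back path
   y->a->w->x; leaving a vertex w entered from a common out-neighbour a
   towards a common in-neighbour w' gives the back path
   y->a->w->w'->x, which uses at most 3 colors because the 4-cycle
   y->a->w->w'->y is at most 2-colored.  Since y is never trapped and the
   first vertex after x on any path is trapped, no path leads from x to y,
   contradicting the hypothesis; so d(x,y) <= 2. *)

(* A list of arc colors has at most one more distinct value after changing
   its last entry; this is how the color bound of a 4-cycle transfers to a
   path sharing its first three arcs. *)
Lemma size_undup_rcons (s : seq nat) (a b : nat) :
  size (undup (rcons s a)) <= (size (undup (rcons s b))).+1.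
Proof.
have sub : {subset rcons s a <= a :: rcons s b}.
  by move=> z; rewrite inE !mem_rcons !inE => /orP [->|->]; rewrite ?orbT.
apply: (@leq_trans (size (undup (a :: rcons s b)))).
  apply: uniq_leq_size (undup_uniq _) _ => z.
  by rewrite !mem_undup => /sub.
by rewrite /=; case: (a \in rcons s b).
Qed.

Lemma num_colors_bounds (T : finType) (color : T -> T -> nat) (x : T)
    (s : seq T) :
  s != [::] -> 1 <= num_colors color x s <= size s.
Proof.
move=> s_nz; rewrite /num_colors /walk_colors.
rewrite (leq_trans (size_undup _)) ?size_pairmap // andbT lt0n size_eq0.
by apply: contra s_nz => /eqP /undup_nil; case: s.
Qed.

Lemma path_last_inv (T : Type) (e : rel T) (P : T -> Prop) (x : T) (s : seq T) :
  (forall u v, P u -> e u v -> P v) -> P x -> path e x s -> P (last x s).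
Proof.
move=> stepP; elim: s x => [|v s IH] x //= Px /andP [exv pv].
exact: IH (stepP _ _ Px exv) pv.
Qed.

Section ShortPaths.

Variables (T : finType) (r : nat) (part : T -> 'I_r) (arc : rel T).
Variable color : T -> T -> nat.

Hypothesis independent : forall u v, part u = part v -> ~~ arc u v.
Hypothesis semicomplete : forall u v, part u <> part v -> arc u v || arc v u.
Hypothesis C4_colors : C4_at_most_2_colored arc color.

Lemma arc_part_neq u v : arc u v -> part u != part v.
Proof. by apply: contraTneq => /independent. Qed.

Lemma arc_neq u v : arc u v -> u != v.
Proof. by move/arc_part_neq; apply: contraNneq => ->. Qed.

Variables x y : T.
Hypothesis x_neq_y : x != y.
Hypothesis no_arc_xy : ~~ arc x y.
Hypothesis no_2path_xy : forall z, arc x z -> arc z y -> False.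
Hypothesis no_back_path : ~ exists s : seq T,
  [/\ dpath arc y x s, 1 <= num_colors color y s & num_colors color y s <= 3].

(* Back paths with at most 3 arcs use at most 3 colors, so there are none. *)
Lemma no_short_back_path s : dpath arc y x s -> size s <= 3 -> False.
Proof.
move=> ps s_small; apply: no_back_path; exists s.
have s_nz : s != [::].
  case: s ps s_small => // /and3P [_ _ /eqP /= yx].
  by move: x_neq_y; rewrite yx eqxx.
have /andP [c_ge1 c_le] := num_colors_bounds color y s_nz.
by split=> //; apply: leq_trans s_small.
Qed.

Lemma no_arc_yx : ~~ arc y x.
Proof.
apply/negP => yx; apply: (@no_short_back_path [:: x]) => //.
by rewrite /dpath /= yx !inE eq_sym x_neq_y eqxx.
Qed.

Lemma no_2path_yx a : arc y a -> arc a x -> False.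
Proof.
move=> ya ax; apply: (@no_short_back_path [:: a; x]) => //.
rewrite /dpath /= ya ax !inE !negb_or (arc_neq ya) (arc_neq ax).
by rewrite eq_sym x_neq_y eqxx.
Qed.

Lemma no_3path_yx a b : arc y a -> arc a b -> arc b x -> False.
Proof.
move=> ya ab bx.
have a_neq_x : a != x by apply: contraTneq ya => ->; exact: no_arc_yx.
have y_neq_b : y != b by apply: contraTneq bx => <-; exact: no_arc_yx.
apply: (@no_short_back_path [:: a; b; x]) => //.
rewrite /dpath /= ya ab bx !inE !negb_or (arc_neq ya) (arc_neq ab) (arc_neq bx).
by rewrite y_neq_b a_neq_x eq_sym x_neq_y eqxx.
Qed.

Lemma same_part_xy : part x = part y.
Proof.
apply/eqP; apply: contraNT (no_arc_xy) => /eqP /semicomplete.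
by rewrite (negbTE no_arc_yx) orbF.
Qed.

Definition common_out (v : T) : bool := arc x v && arc y v.
Definition common_in (v : T) : bool := arc v x && arc v y.

(* Outside the partite set of x, a vertex dominates both x and y or is
   dominated by both, since mixed 2-paths between x and y are excluded. *)
Lemma other_part_dichotomy v :
  part v != part x -> common_out v || common_in v.
Proof.
move=> pv; have pvx : part x <> part v by apply/eqP; rewrite eq_sym.
have pvy : part y <> part v by rewrite -same_part_xy.
rewrite /common_out /common_in.
move: (semicomplete pvx) (semicomplete pvy).
case xv: (arc x v); case yv: (arc y v); case vx: (arc v x); case vy: (arc v y) => //=.
- by case: (no_2path_xy xv vy).
- by case: (no_2path_yx yv vx).
Qed.

(* The color bound of the 4-cycle y->a->w->w'->y yields the back path
   y->a->w->w'->x with at most 3 colors. *)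
Lemma no_back_path_via_C4 a w w' :
  common_out a -> common_in w' -> part w = part x -> w != y ->
  arc a w -> arc w w' -> False.
Proof.
move=> /andP [xa ya] /andP [w'x w'y] pw w_neq_y aw ww'.
have pa : part a != part x by rewrite -pw arc_part_neq.
have pw' : part w' != part x by rewrite -pw eq_sym arc_part_neq.
have neq_x u : part u != part x -> u != x by apply: contraNneq => ->.
have neq_y u : part u != part x -> u != y.
  by rewrite same_part_xy; apply: contraNneq => ->.
have w_neq_x : w != x.
  by apply: contraTneq aw => ->; apply/negP => /(no_2path_yx ya).
have a_neq_w' : a != w'.
  by apply: contraTneq w'y => <-; apply/negP => /(no_2path_xy xa).
have w_neq_w' := arc_neq ww'.
have a_neq_w := arc_neq aw.
have cycle_ok : uniq [:: y; a; w; w'].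
  rewrite /= !inE !negb_or ![y == _]eq_sym neq_y // w_neq_y neq_y //=.
  by rewrite a_neq_w a_neq_w' w_neq_w'.
have colors3 :
    size (undup [:: color y a; color a w; color w w'; color w' x]) <= 3.
  apply: leq_trans (size_undup_rcons [:: color y a; color a w; color w w']
                                      (color w' x) (color w' y)) _.
  exact: C4_colors cycle_ok ya aw ww' w'y.
have back_path_ok : uniq [:: y; a; w; w'; x].
  rewrite -[[:: y; a; w; w'; x]]/(rcons [:: y; a; w; w'] x) rcons_uniq cycle_ok.
  by rewrite !inE !negb_or x_neq_y ![x == _]eq_sym neq_x // w_neq_x neq_x.
apply: no_back_path; exists [:: a; w; w'; x]; split=> //.
- by rewrite /dpath back_path_ok /= ya aw ww' w'x eqxx.
- by case/andP: (num_colors_bounds color y (isT : [:: a; w; w'; x] != [::])).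
Qed.

(* The vertices from which y cannot be reached: common out-neighbours, and
   vertices of the partite set of x other than y entered from one. *)
Definition trapped (v : T) : Prop :=
  common_out v \/ [/\ part v = part x, v != y & exists2 a, common_out a & arc a v].

Lemma trapped_neq_y v : trapped v -> v != y.
Proof. by case=> [/andP [_ /arc_neq]|[]]; rewrite // eq_sym. Qed.

Lemma trapped_step u v : trapped u -> arc u v -> trapped v.
Proof.
move=> tu uv; have [pv|pv] := eqVneq (part v) (part x).
  case: tu => [/andP [xu yu]|[pu _ _]]; last first.
    by move: (arc_part_neq uv); rewrite pu pv eqxx.
  right; split=> //; last by exists u => //; apply/andP.
  by apply: contraTneq uv => ->; apply/negP => /(no_2path_xy xu).
case/orP: (other_part_dichotomy pv) => [|v_in]; first by left.
case: tu => [/andP [_ yu]|[pu u_neq_y [a a_out au]]].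
- by case/andP: v_in => vx _; case: (no_3path_yx yu uv vx).
- by case: (no_back_path_via_C4 a_out v_in pu u_neq_y au uv).
Qed.

Lemma no_forward_path s : path arc x s -> last x s != y.
Proof.
case: s => [|v s] /=; first by rewrite x_neq_y.
case/andP=> xv pvs; apply: trapped_neq_y; apply: path_last_inv pvs.
- exact: trapped_step.
- have pv : part v != part x by rewrite eq_sym arc_part_neq.
  left; case/orP: (other_part_dichotomy pv) => // /andP [_ vy].
  by case: (no_2path_xy xv vy).
Qed.

End ShortPaths.

Unset Implicit Arguments.

Theorem mainTheorem3 (T : finType) (r m : nat) (part : T -> 'I_r)
  (arc : rel T) (color : T -> T -> nat) :
  3 <= r ->
  semicomplete_multipartite part arc ->
  m_coloring arc m color ->
  C4_at_most_2_colored arc color ->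
  forall x y : T, x != y ->
  (exists s : seq T, dpath arc x y s /\ num_colors color x s = 3) ->
  ~ (exists s : seq T, [/\ dpath arc y x s, 1 <= num_colors color y s
                          & num_colors color y s <= 3]) ->
  exists s : seq T, dpath arc x y s /\ size s <= 2.
Proof.
move=> _ [_ [indep semi]] _ C4 x y x_neq_y [s [/and3P [ps _ ls] _]] no_back.
have [xy|no_xy] := boolP (arc x y).
  by exists [:: y]; rewrite /dpath /= xy !inE x_neq_y eqxx.
case: (pickP (fun z => arc x z && arc z y)) => [z /andP [xz zy]|no_mid].
  exists [:: z; y]; split=> //; rewrite /dpath /= xz zy eqxx !inE !negb_or x_neq_y.
  by rewrite (arc_neq indep xz) (arc_neq indep zy).
have no_2path z : arc x z -> arc z y -> False.
  by move=> xz zy; move: (no_mid z); rewrite xz zy.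
by case/negP: (no_forward_path indep semi C4 x_neq_y no_xy no_2path no_back ps).
Qed.
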